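(* Let $n=2p$ with $p$ a positive integer, $a,b\in\mathbb{C}$, $b\ne0$, and let $A^{\dagger}$ be the $n\times n$ tridiagonal matrix with diagonal entries $a$ and $A^{\dagger}_{k,k+1}=A^{\dagger}_{k+1,k}=(-1)^{k+1}b$ for $k=1,\dots,n-1$. Let $\lambda_k^{\dagger}=a-2b\cos\left(\frac{k\pi}{n+1}\right)$, $\psi_k=\frac{\lambda_k^{\dagger}-a}{b}$ and $\eta_k=\frac{4-\psi_k^2}{2n+2}$ for $k=1,\dots,n$. Let $s$ be a nonnegative integer, or any integer if $A^{\dagger}$ is invertible. Then the entries $l_{ij}(s)$ of $(A^{\dagger})^s$ are $$l_{ij}(s)=\sum_{k=1}^{n}(\lambda_k^{\dagger})^{s}\eta_k\,r_{i-1}r_{j-1}\,U_{i-1}\left(\tfrac{\psi_k}{2}\right)U_{j-1}\left(\tfrac{\psi_k}{2}\right),\quad i,j=1,\dots,n.$$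
   Context: $U_m$ is the Chebyshev polynomial of the second kind: $U_0=1$, $U_1=2x$, $U_{m+1}=2xU_m-U_{m-1}$. For an integer $m\ge0$, $r_m=1$ if $m\equiv0,1\pmod4$ and $r_m=-1$ if $m\equiv2,3\pmod4$. *)

From HB Require Import structures.
From mathcomp Require Import all_boot all_order all_algebra.
From mathcomp Require Import complex.
From mathcomp Require Import reals trigo.
Set Implicit Arguments. Unset Strict Implicit. Unset Printing Implicit Defensive.
Import Order.TTheory GRing.Theory Num.Theory.
Local Open Scope ring_scope.

Fixpoint chebU_pair (T : nzRingType) (x : T) (m : nat) : T * T :=
  (* returns (U_m x, U_{m+1} x) *)
  match m with
  | 0%N => (1, 2 * x)
  | m'.+1 => let '(u, v) := chebU_pair x m' in (v, 2 * x * v - u)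
  end.
Definition chebU (T : nzRingType) (m : nat) (x : T) : T := (chebU_pair x m).1.

Definition rsign (T : nzRingType) (m : nat) : T :=
  if (m %% 4 < 2)%N then 1 else -1.

Definition mxpowz (T : comUnitRingType) (n : nat) (A : 'M[T]_n) (s : int)
  : 'M[T]_n :=
  match s with
  | Posz k => A ^+ k
  | Negz k => (invmx A) ^+ k.+1
  end.

(* The n x n tridiagonal matrix A^dagger, 0-based indices:
   diagonal a, and (k,k+1),(k+1,k) entries (-1)^(k+1) b for 1-based k,
   i.e. (-1)^i b for 0-based i with j = i+1. *)
Definition Adag (T : nzRingType) (n : nat) (a b : T) : 'M[T]_n :=
  \matrix_(i < n, j < n)
    if i == j then a
    else if (val j == (val i).+1)%N then (-1) ^+ (val i).+2 * b
    else if (val i == (val j).+1)%N then (-1) ^+ (val j).+2 * b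
    else 0.

Section Eig.
Variable R : realType.
Local Notation C := (R[i]).
Definition lamdag (n : nat) (a b : C) (k : nat) : C :=
  a - 2 * b * ((cos (k%:R * pi / (n.+1)%:R) : R)%:C)%C.
Definition psik (n : nat) (a b : C) (k : nat) : C := (lamdag n a b k - a) / b.
Definition etak (n : nat) (a b : C) (k : nat) : C :=
  (4 - psik n a b k ^+ 2) / (2 * n.+1)%:R.
End Eig.

From HB Require Import structures.
From mathcomp Require Import all_boot all_order all_algebra.
From mathcomp Require Import complex.
From mathcomp Require Import reals trigo.
From mathcomp Require Import ring zify.
Set Implicit Arguments. Unset Strict Implicit. Unset Printing Implicit Defensive.
Import Order.TTheory GRing.Theory Num.Theory.
Local Open Scope ring_scope.

(* Write y_k = psi_k / 2 = - cos (k pi / (n + 1)): these are the n roots of U_n.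
   The three-term recurrence of U is the eigen-equation of A^dagger, the signs
   r_i absorb the alternating off-diagonal and U_n (y_k) = 0 is the boundary
   condition, so the vector (r_i U_i (y_k))_i is an eigenvector for
   a + 2 b y_k = lambda_k.  By Christoffel-Darboux these eigenvectors are
   orthogonal, and eta_k is the inverse of the squared norm of the k-th one;
   hence A^dagger = V diag(lambda) W with W V = 1, which gives every power. *)

Section Chebyshev.
Variable T : comNzRingType.
Implicit Types x y : T.

Lemma chebU0 x : chebU 0 x = 1. Proof. by []. Qed.
Lemma chebU1 x : chebU 1 x = 2 * x. Proof. by []. Qed.

Lemma chebU_pairE x m : chebU_pair x m = (chebU m x, chebU m.+1 x).
Proof. by rewrite /chebU /=; case: (chebU_pair x m). Qed.

Lemma chebUSS x m : chebU m.+2 x = 2 * x * chebU m.+1 x - chebU m x.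
Proof. by rewrite {1}/chebU /= chebU_pairE. Qed.

Lemma chebU_opp x m : chebU m (- x) = (-1) ^+ m * chebU m x.
Proof.
suff: chebU m (- x) = (-1) ^+ m * chebU m x /\
      chebU m.+1 (- x) = (-1) ^+ m.+1 * chebU m.+1 x by case.
elim: m => [|m [IH1 IH2]]; first by rewrite !chebU0 !chebU1; split; ring.
by split=> //; rewrite !chebUSS IH1 IH2 !exprS; ring.
Qed.

Lemma chebU_cassini x m :
  chebU m x ^+ 2 - 2 * x * chebU m x * chebU m.+1 x + chebU m.+1 x ^+ 2 = 1.
Proof.
elim: m => [|m IH]; first by rewrite chebU0 chebU1; ring.
by rewrite chebUSS -[RHS]IH; ring.
Qed.

Lemma chebU_sumsq x m :
  4 * (1 - x ^+ 2) * \sum_(j < m) chebU j x ^+ 2 =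
  (2 * m + 1)%:R - chebU m x ^+ 2 + (2 * x * chebU m x - chebU m.+1 x) ^+ 2.
Proof.
elim: m => [|m IH]; first by rewrite big_ord0 !chebU0 !chebU1; ring.
rewrite big_ord_recr /= mulrDr IH chebUSS.
have := chebU_cassini x m; set u := chebU m x; set v := chebU m.+1 x => uv.
have -> : (2 * m.+1 + 1)%:R = (2 * m + 1)%:R + 2 * (u ^+ 2 - 2 * x * u * v + v ^+ 2).
  by rewrite uv; ring.
ring.
Qed.

Lemma chebU_sum_mul x y m :
  2 * (x - y) * \sum_(j < m) chebU j x * chebU j y =
  chebU m x * (2 * y * chebU m y - chebU m.+1 y)
  - (2 * x * chebU m x - chebU m.+1 x) * chebU m y.
Proof.
elim: m => [|m IH]; first by rewrite big_ord0 !chebU0 !chebU1; ring.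
by rewrite big_ord_recr /= mulrDr IH !chebUSS; ring.
Qed.

Lemma chebU_sumsq_root x n : chebU n x = 0 ->
  4 * (1 - x ^+ 2) * \sum_(j < n) chebU j x ^+ 2 = (2 * n.+1)%:R.
Proof.
move=> Un0; have := chebU_cassini x n.
rewrite chebU_sumsq Un0 => Un1.
have -> : (2 * n.+1)%:R =
    (2 * n + 1)%:R + (0 ^+ 2 - 2 * x * 0 * chebU n.+1 x + chebU n.+1 x ^+ 2) :> T.
  by rewrite Un1; ring.
ring.
Qed.

End Chebyshev.

Lemma chebU_sum_mul_roots (T : numDomainType) (x y : T) n :
  chebU n x = 0 -> chebU n y = 0 -> x != y ->
  \sum_(j < n) chebU j x * chebU j y = 0.
Proof.
move=> Unx Uny xy; have := chebU_sum_mul x y n; rewrite Unx Uny.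
rewrite mul0r mulr0 subrr => /eqP.
by rewrite !mulf_eq0 pnatr_eq0 subr_eq0 (negbTE xy) => /eqP.
Qed.

Lemma chebU_rmorph (T S : comNzRingType) (f : {rmorphism T -> S}) x m :
  chebU m (f x) = f (chebU m x).
Proof.
suff: chebU m (f x) = f (chebU m x) /\ chebU m.+1 (f x) = f (chebU m.+1 x) by case.
elim: m => [|m [IH1 IH2]]; first by rewrite /= rmorph1 rmorphM rmorph_nat.
by split=> //; rewrite chebUSS IH1 IH2 chebUSS rmorphB !rmorphM rmorph_nat.
Qed.

Section ChebyshevRoots.
Variable R : realType.

Lemma chebU_cos_mul_sin (t : R) m : chebU m (cos t) * sin t = sin (m.+1%:R * t).
Proof.
suff: chebU m (cos t) * sin t = sin (m.+1%:R * t) /\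
      chebU m.+1 (cos t) * sin t = sin (m.+2%:R * t) by case.
elim: m => [|m [IH1 IH2]].
  rewrite chebU0 chebU1 !mul1r; split=> //.
  by rewrite [in RHS]mulr_natl sin_mulr2n -mulr_natl; ring.
split=> //; rewrite chebUSS.
transitivity (2 * cos t * (chebU m.+1 (cos t) * sin t) - chebU m (cos t) * sin t).
  by ring.
rewrite IH2 IH1.
have -> : m.+3%:R * t = m.+2%:R * t + t by rewrite -[m.+3]addn1 natrD mulrDl mul1r.
have -> : m.+1%:R * t = m.+2%:R * t - t by rewrite -[m.+2]addn1 natrD mulrDl mul1r addrK.
by rewrite !sinD sinN cosN; ring.
Qed.

Lemma sin_natr_mulpi k : sin (k%:R * pi) = 0 :> R.
Proof. by have := alternatingn (@sinDpi R) k 0; rewrite add0r sin0 mulr0 mulr_natl. Qed.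

Definition cheb_angle (n k : nat) : R := k.+1%:R * pi / n.+1%:R.

Lemma cheb_angle_itv n k : (k < n)%N -> 0 < cheb_angle n k < pi.
Proof.
move=> kn; rewrite divr_gt0 ?mulr_gt0 ?ltr0n ?pi_gt0 //=.
by rewrite ltr_pdivrMr ?ltr0n // mulrC ltr_pM2l ?pi_gt0 // ltr_nat ltnS.
Qed.

Lemma chebU_cos_cheb_angle n k : (k < n)%N -> chebU n (cos (cheb_angle n k)) = 0.
Proof.
move=> /cheb_angle_itv angle_itv; have sin_gt0 := sin_gt0_pi angle_itv.
have := chebU_cos_mul_sin (cheb_angle n k) n.
have -> : n.+1%:R * cheb_angle n k = k.+1%:R * pi.
  by rewrite /cheb_angle mulrC divfK ?pnatr_eq0.
rewrite sin_natr_mulpi.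
by move/eqP; rewrite mulf_eq0 (gt_eqF sin_gt0) orbF => /eqP.
Qed.

Lemma cos_cheb_angle_inj n k l : (k < n)%N -> (l < n)%N ->
  cos (cheb_angle n k) = cos (cheb_angle n l) -> k = l.
Proof.
move=> /cheb_angle_itv/andP[k0 kpi] /cheb_angle_itv/andP[l0 lpi] /cos_inj.
rewrite !in_itv /= !ltW // => /(_ isT isT) /(mulIf _).
rewrite invr_eq0 pnatr_eq0 => /(_ isT) /(mulIf (lt0r_neq0 (@pi_gt0 R))) /eqP.
by rewrite eqr_nat eqSS => /eqP.
Qed.

End ChebyshevRoots.

Section Tridiagonal.
Variable T : comNzRingType.

Lemma rsign_add4 m : rsign T m.+4 = rsign T m.
Proof. by rewrite /rsign -addn4 modnDr. Qed.

Lemma rsignS m : rsign T m.+1 = (-1) ^+ m * rsign T m.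
Proof.
elim/ltn_ind: m => -[|[|[|[|m]]]] IH; try by rewrite /rsign /=; ring.
have /IH IHm : (m < m.+4)%N by lia.
by rewrite -[m.+4.+1]/(m.+1.+4) !rsign_add4 IHm !exprS; ring.
Qed.

Lemma signr_rsignS m : (-1) ^+ m * rsign T m.+1 = rsign T m.
Proof. by rewrite rsignS signrMK. Qed.

Lemma rsign_sqr m : rsign T m ^+ 2 = 1.
Proof. by rewrite /rsign; case: ifP => _; rewrite ?sqrrN expr1n. Qed.

Lemma sum_ord_delta n (F : nat -> T) m :
  \sum_(j < n) (j == m :> nat)%:R * F j = (m < n)%:R * F m.
Proof.
case: (ltnP m n) => [mn|nm].
  rewrite (bigD1 (Ordinal mn)) //= eqxx mul1r big1 ?addr0 // => j.
  by rewrite -val_eqE /= => /negbTE ->; rewrite mul0r.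
rewrite mul0r big1 // => j _.
have /negbTE -> : (j != m :> nat) by apply/eqP; have := ltn_ord j; lia.
by rewrite mul0r.
Qed.

Lemma Adag_entry n (a b : T) (i j : 'I_n) :
  Adag n a b i j = (j == i :> nat)%:R * a + (j == i.+1 :> nat)%:R * ((-1) ^+ i * b)
                   + (i == j.+1 :> nat)%:R * ((-1) ^+ j * b).
Proof.
rewrite mxE -val_eqE /=; case: i j => [i _] [j _] /=.
have [<-|ij] := eqVneq i j; first by rewrite (ltn_eqF (ltnSn i)) /=; ring.
have [->|ji] := eqVneq j i.+1.
  by rewrite (ltn_eqF (ltnW (ltnSn i.+1))) /= !exprS; ring.
by have [->|_] := eqVneq i j.+1; rewrite /= ?exprS; ring.
Qed.

Lemma Adag_mul_col n (a b : T) (f : nat -> T) (i : 'I_n) : f n = 0 ->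
  \sum_(j < n) Adag n a b i j * f j =
  a * f i + (-1) ^+ i * b * f i.+1
  + (if nat_of_ord i is i'.+1 then (-1) ^+ i' * b * f i' else 0).
Proof.
move=> fn0.
under eq_bigr do rewrite Adag_entry !mulrDl -!mulrA.
rewrite !big_split /= (sum_ord_delta _ (fun j => a * f j)) ltn_ord mul1r.
rewrite (sum_ord_delta _ (fun j => (-1) ^+ i * (b * f j))) mulrA.
have -> : (i.+1 < n)%:R * (-1) ^+ i * (b * f i.+1) = (-1) ^+ i * b * f i.+1.
  case: ltnP => [_|ni]; first by rewrite mul1r mulrA.
  have -> : i.+1 = n by have := ltn_ord i; lia.
  by rewrite fn0 !mulr0.
case: i => -[|i] /= lt_in; first by rewrite big1 ?addr0 // => j _; rewrite mul0r.
under eq_bigr do rewrite eqSS eq_sym.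
by rewrite (sum_ord_delta _ (fun j => (-1) ^+ j * (b * f j))) ltnW // mul1r mulrA.
Qed.

Lemma Adag_mul_chebU n (a b y : T) (i : 'I_n) : chebU n y = 0 ->
  \sum_(j < n) Adag n a b i j * (rsign T j * chebU j y) =
  (a + 2 * b * y) * (rsign T i * chebU i y).
Proof.
move=> Uy.
rewrite (@Adag_mul_col n a b (fun j => rsign T j * chebU j y)) /= ?Uy ?mulr0 //.
case: i => -[|i] /= _; first by rewrite /rsign /= chebU0 chebU1; ring.
transitivity (a * (rsign T i.+1 * chebU i.+1 y)
  + b * ((-1) ^+ i.+1 * rsign T i.+2) * chebU i.+2 y
  + b * ((-1) ^+ i * rsign T i) * chebU i y); first ring.
by rewrite signr_rsignS -rsignS chebUSS; ring.
Qed.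

End Tridiagonal.

Section Diagonalization.
Variables (F : fieldType) (n : nat) (V W : 'M[F]_n).
Hypothesis WV : W *m V = 1%:M.

Let VW : V *m W = 1%:M. Proof. exact: mulmx1C. Qed.

Lemma mulmx_conj_diag (d e : 'rV[F]_n) :
  (V *m diag_mx d *m W) *m (V *m diag_mx e *m W) =
  V *m diag_mx (\row_k (d 0 k * e 0 k)) *m W.
Proof. by rewrite -!mulmxA (mulmxA W) WV mul1mx (mulmxA (diag_mx d)) mulmx_diag. Qed.

Lemma expmx_conj_diag (d : 'rV[F]_n) m :
  (V *m diag_mx d *m W) ^+ m = V *m diag_mx (\row_k (d 0 k ^+ m)) *m W.
Proof.
elim: m => [|m IH].
  rewrite expr0 (_ : \row_k _ = const_mx 1) ?diag_const_mx ?mulmx1 ?VW //.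
  by apply/rowP => k; rewrite !mxE.
rewrite exprS IH -mulmxE mulmx_conj_diag.
by congr (_ *m diag_mx _ *m _); apply/rowP => k; rewrite !mxE exprS.
Qed.

Lemma invmx_conj_diag (d : 'rV[F]_n) : V *m diag_mx d *m W \in unitmx ->
  invmx (V *m diag_mx d *m W) = V *m diag_mx (\row_k (d 0 k)^-1) *m W.
Proof.
move=> A_unit; have [W_unit V_unit] := mulmx1_unit WV.
have d_neq0 k : d 0 k != 0.
  have : diag_mx d \in unitmx.
    have -> : diag_mx d = W *m (V *m diag_mx d *m W) *m V.
      by rewrite !mulmxA WV mul1mx -mulmxA WV mulmx1.
    by rewrite unitmx_mul (unitmx_mul W) W_unit A_unit V_unit.
  by rewrite unitmxE det_diag unitfE => /prodf_neq0; apply.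
rewrite -[RHS]mul1mx -(mulVmx A_unit) -(mulmxA (invmx _)) mulmx_conj_diag.
rewrite (_ : \row_k _ = const_mx 1) ?diag_const_mx ?mulmx1 ?VW ?mulmx1 //.
by apply/rowP => k; rewrite !mxE mulfV.
Qed.

Lemma mxpowz_conj_diag (d : 'rV[F]_n) (s : int) :
  0 <= s \/ V *m diag_mx d *m W \in unitmx ->
  mxpowz (V *m diag_mx d *m W) s = V *m diag_mx (\row_k (d 0 k ^ s)) *m W.
Proof.
case: s => m [] //= A_unit; rewrite ?invmx_conj_diag // expmx_conj_diag;
  by congr (_ *m diag_mx _ *m _); apply/rowP => k; rewrite !mxE ?exprVn.
Qed.

End Diagonalization.

Section AdagSpectrum.
Variable R : realType.
Local Notation C := R[i].
Variables (n : nat) (a b : C).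
Hypothesis b_neq0 : b != 0.
Local Notation y k := (psik n a b k.+1 / 2).

Lemma psik_half k : y k = - (cos (cheb_angle R n k))%:C%C.
Proof. by rewrite /psik /lamdag /cheb_angle; field. Qed.

Lemma lamdag_psik k : lamdag n a b k.+1 = a + 2 * b * y k.
Proof. by rewrite psik_half /lamdag /cheb_angle; ring. Qed.

Lemma etak_psik k : etak n a b k.+1 = 4 * (1 - y k ^+ 2) / (2 * n.+1)%:R.
Proof. by rewrite /etak; congr (_ / _); field. Qed.

Lemma chebU_psik k : (k < n)%N -> chebU n (y k) = 0.
Proof.
move=> kn; rewrite psik_half -rmorphN chebU_rmorph chebU_opp.
by rewrite chebU_cos_cheb_angle // mulr0 rmorph0.
Qed.

Lemma psik_inj k l : (k < n)%N -> (l < n)%N -> y k = y l -> k = l.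
Proof.
move=> kn ln; rewrite !psik_half => /oppr_inj /complexI.
exact: cos_cheb_angle_inj.
Qed.

Lemma etak_orthonormal k l : (k < n)%N -> (l < n)%N ->
  etak n a b k.+1 * \sum_(j < n) chebU j (y k) * chebU j (y l) = (k == l)%:R.
Proof.
move=> kn ln; have [<-|kl] := eqVneq k l.
  under eq_bigr do rewrite -expr2.
  by rewrite etak_psik mulrAC chebU_sumsq_root ?chebU_psik // divff ?pnatr_eq0.
rewrite chebU_sum_mul_roots ?chebU_psik ?mulr0 //.
by apply: contra_neq kl; apply: psik_inj.
Qed.

Definition Adag_eigvecs : 'M[C]_n := \matrix_(i, k) (rsign C i * chebU i (y k)).
Definition Adag_dual_eigvecs : 'M[C]_n :=
  \matrix_(k, j) (etak n a b k.+1 * rsign C j * chebU j (y k)).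
Definition Adag_eigvals : 'rV[C]_n := \row_k lamdag n a b k.+1.

Lemma Adag_dual_eigvecsK : Adag_dual_eigvecs *m Adag_eigvecs = 1%:M.
Proof.
apply/matrixP => k l; rewrite !mxE -val_eqE /= -etak_orthonormal // mulr_sumr.
apply: eq_bigr => j _; rewrite !mxE.
transitivity (etak n a b k.+1 * (chebU j (y k) * chebU j (y l)) * rsign C j ^+ 2).
  by ring.
by rewrite rsign_sqr mulr1.
Qed.

Lemma Adag_mul_eigvecs :
  Adag n a b *m Adag_eigvecs = Adag_eigvecs *m diag_mx Adag_eigvals.
Proof.
apply/matrixP => i k; rewrite mul_mx_diag [LHS]mxE [RHS]mxE.
under eq_bigr do rewrite [Adag_eigvecs _ _]mxE.
rewrite [Adag_eigvecs _ _]mxE [Adag_eigvals _ _]mxE.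
by rewrite Adag_mul_chebU ?chebU_psik // lamdag_psik mulrC.
Qed.

Lemma Adag_diagonalization :
  Adag n a b = Adag_eigvecs *m diag_mx Adag_eigvals *m Adag_dual_eigvecs.
Proof. by rewrite -Adag_mul_eigvecs -mulmxA (mulmx1C Adag_dual_eigvecsK) mulmx1. Qed.

Lemma mxpowz_Adag_entry (s : int) (i j : 'I_n) :
  0 <= s \/ Adag n a b \in unitmx ->
  mxpowz (Adag n a b) s i j =
  \sum_(k < n) lamdag n a b k.+1 ^ s * etak n a b k.+1 * rsign _ i * rsign _ j
                * chebU i (y k) * chebU j (y k).
Proof.
rewrite Adag_diagonalization => s_cond.
rewrite mxpowz_conj_diag ?Adag_dual_eigvecsK // mul_mx_diag mxE.
by apply: eq_bigr => k _; rewrite !mxE; ring.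
Qed.

End AdagSpectrum.

Theorem mainTheorem4 (R : realType) (p : nat) (a b : R[i]) (s : int) :
  (0 < p)%N -> b != 0 ->
  (0 <= s \/ Adag (2 * p) a b \in unitmx) ->
  forall i j : 'I_(2 * p),
    mxpowz (Adag (2 * p) a b) s i j =
    \sum_(k < 2 * p)
      lamdag (2 * p) a b k.+1 ^ s
      * etak (2 * p) a b k.+1 * rsign _ i * rsign _ j
      * chebU i (psik (2 * p) a b k.+1 / 2)
      * chebU j (psik (2 * p) a b k.+1 / 2).
Proof. by move=> _ b_neq0 s_cond i j; apply: mxpowz_Adag_entry. Qed.
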